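(* Let $X$, $H$, $v=(r,H,s)$ (primitive), $Y$, $a,b,c,d$, $\widetilde H=H/d$ be as in the context, let $\gamma=\gamma(\widetilde H)$ in $N(X)$, and assume $\gcd(c,d\gamma)=1$. Then: (1) $N(X)=[\widetilde H,\ K(\widetilde H),\ \gamma\widetilde H^*+u^*(\widetilde H)]$, where $\widetilde H^*=\widetilde H/\widetilde H^2=d^2\widetilde H/(2abc^2)$, and $u^*(\widetilde H)+K(\widetilde H)$ has order $2abc^2/(d^2\gamma)$ in $K(\widetilde H)^*/K(\widetilde H)$. (2) Let $h\in N(Y)$ be the class of $(-a,0,b)$ mod $\mathbb Zv$. Then $h^2=2ab$, $h$ is divisible by $d$ in $N(Y)$, $\widetilde h=h/d$ is primitive in $N(Y)$, $\gamma(\widetilde h)=\gamma$ (computed in $N(Y)$), and $N(Y)=[\widetilde h,\ K(h),\ \gamma\widetilde h^*+u^*(\widetilde h)]$, where $K(h)=h^\perp\subset N(Y)$, $\widetilde h^*=d^2\widetilde h/(2ab)$, and $u^*(\widetilde h)+K(h)$ has order $2ab/(d^2\gamma)$ in $K(h)^*/K(h)$. (3) Under the map $K(\widetilde H)\to N(Y)$, $k\mapsto (0,k,0)\bmod\mathbb Zv$, $K(\widetilde H)$ is identified with a sublattice of $K(h)$ (so that $K(h)\otimes\mathbb Q=K(\widetilde H)\otimes\mathbb Q$), and $$K(h)=\Big[K(\widetilde H),\ \tfrac{2ab}{d^2\gamma}\,c\,u^*(\widetilde H)\Big],\qquad u^*(\widetilde h)+K(h)=m(a,b)\,c\,u^*(\widetilde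 H)+K(h),$$ where $m(a,b)$ is an integer with $m(a,b)\equiv-1\pmod{2a}$, $m(a,b)\equiv1\pmod{2b}$ (only its class mod $2ab/(d^2\gamma)$ matters).
   Context: $X$ is a smooth complex projective K3 surface with Picard lattice $N(X)\subset H^2(X,\mathbb Z)$. $H\in N(X)$ is a polarization with $H^2=2rs$, $r,s\in\mathbb N$; $d\in\mathbb N$ with $\widetilde H=H/d$ primitive. On $H^*(X,\mathbb Z)\cong\mathbb Z\oplus H^2(X,\mathbb Z)\oplus\mathbb Z$ use the Mukai pairing $((u_0,u_1,u_2),(v_0,v_1,v_2))=-(u_0v_2+u_2v_0)+u_1\cdot v_1$; $v=(r,H,s)$ is isotropic and primitive. $Y$ is the moduli space of $H$-semistable coherent sheaves with Mukai vector $v$ (minimal resolution if singular), a K3 surface; by Mukai, $H^2(Y,\mathbb Z)\cong v^\perp/\mathbb Zv$ as Hodge structures, and $N(Y)=v^\perp_{\mathbb Z\oplus N(X)\oplus\mathbb Z}/\mathbb Zv$. $c=\gcd(r,s)$, $a=r/c$, $b=s/c$. For an even lattice $S$ and primitive $P\in S$ with $P^2=2m\neq0$: $\gamma(P)>0$ with $P\cdot S=\gamma(P)\mathbb Z$; $K(P)=P^\perp\subset S$; $P^*=P/(2m)$; $u^*(P)\in K(P)^*$ is an element with $\gamma(P)P^*+u^*(P)\in S$ (canonical mod $K(P)$). $[x_1,\dots,x_k]$ denotes the subgroup generated by the listed elements/sublattices inside the ambient rational space. *)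

From HB Require Import structures.
From mathcomp Require Import all_boot all_order all_algebra.
Set Implicit Arguments. Unset Strict Implicit. Unset Printing Implicit Defensive.
Import Order.TTheory GRing.Theory Num.Theory.
Local Open Scope ring_scope.

(* When the lattice is a quotient (N(Y) = v^perp / Z v) we represent it by
   its preimage, which contains the whole line Q v; all sublattices
   considered then contain Q v as well, so equalities hold modulo Q v. *)
Section Generic.
Variable V : lmodType rat.
Variable B : V -> V -> rat.

Definition qint (q : rat) : Prop := q \is a Num.int.

Definition seteq (S T : V -> Prop) : Prop := forall z, S z <-> T z.

Definition lat_gamma (L : V -> Prop) (P : V) (g : nat) : Prop :=
  (0 < g)%N /\
  forall q : rat, (exists x, L x /\ B P x = q) <-> exists z : int, q = g%:R * z%:~R.

Definition Kperp (L : V -> Prop) (P : V) : V -> Prop :=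
  fun x => L x /\ B P x = 0.

Definition qspan (S : V -> Prop) : V -> Prop :=
  fun x => exists n : nat, (0 < n)%N /\ S (n%:R *: x).

Definition dual (S : V -> Prop) : V -> Prop :=
  fun y => qspan S y /\ forall k, S k -> qint (B y k).

Definition Pstar (P : V) : V := (B P P)^-1 *: P.

Definition is_ustar (L : V -> Prop) (P : V) (g : nat) (u : V) : Prop :=
  dual (Kperp L P) u /\ L (g%:R *: Pstar P + u).

Definition order_mod (S : V -> Prop) (y : V) (n : nat) : Prop :=
  [/\ (0 < n)%N, S (n%:R *: y) & forall k : nat, (0 < k < n)%N -> ~ S (k%:R *: y)].

(* P primitive in L; Rad = the subspace one quotients by (0 or Q v) *)
Definition primitive (L Rad : V -> Prop) (P : V) : Prop :=
  [/\ L P, ~ Rad P & forall (n : nat) x, L x -> P = n%:R *: x -> n = 1%N].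

Definition gen3 (x : V) (S : V -> Prop) (y : V) : V -> Prop :=
  fun z => exists (i j : int) k, S k /\ z = i%:~R *: x + k + j%:~R *: y.
End Generic.

Definition zero_set (V : zmodType) : V -> Prop := fun x => x = 0.

Definition bform n (G : 'M[rat]_n) (x y : 'rV[rat]_n) : rat := (x *m G *m y^T) 0 0.

Definition intvec n (x : 'rV[rat]_n) : Prop := forall i, x 0 i \is a Num.int.

Definition intmx n (G : 'M[int]_n) : 'M[rat]_n := map_mx (fun z : int => z%:~R) G.

(* Mukai lattice Z + N + Z, with pairing -(u0 v2 + u2 v0) + u1.v1 *)
Definition mukai_gram n (G : 'M[rat]_n) : 'M[rat]_(1 + n + 1) :=
  block_mx (block_mx (0 : 'M_1) 0 0 G : 'M_(1 + n))
           (col_mx (-1 : 'M_1) 0) (row_mx (-1 : 'M_1) 0) (0 : 'M_1).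

Definition mukai_vec n (r : rat) (x : 'rV[rat]_n) (s : rat) : 'rV[rat]_(1 + n + 1) :=
  row_mx (row_mx (r%:M : 'M_1) x) (s%:M : 'M_1).

(* N(Y) = v^perp / Z v, represented by its preimage in v^perp (x) Q,
   which contains the line Q v *)
Definition NYlat n (G : 'M[rat]_n) (v : 'rV[rat]_(1 + n + 1)) : 'rV[rat]_(1 + n + 1) -> Prop :=
  fun w => bform (mukai_gram G) v w = 0 /\ exists t : rat, intvec (w - t *: v).

Definition lineQ n (v : 'rV[rat]_n) : 'rV[rat]_n -> Prop :=
  fun w => exists t : rat, w = t *: v.

Definition iotaY n (x : 'rV[rat]_n) : 'rV[rat]_(1 + n + 1) := mukai_vec 0 x 0.

From HB Require Import structures.
From mathcomp Require Import all_boot all_order all_algebra.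
From mathcomp Require Import ring zify.
Import Order.TTheory GRing.Theory Num.Theory.
Local Open Scope ring_scope.

Set Implicit Arguments. Unset Strict Implicit. Unset Printing Implicit Defensive.

(* Everything rests on one fact about an integral lattice [L] with a primitive
   vector [P], [P^2 > 0], [P.L = gamma Z]: if [gamma P^* + u^*] lies in [L] with
   [u^*] in [K(P)^*], then [L = [P, K(P), gamma P^* + u^*]] and [u^*] has order
   [P^2 / gamma] modulo [K(P)].  Part (1) is this fact for [Ht] in [N(X)].  For
   part (2), Bezout relations for [(a, b)] and for [(c, dg)], together with
   [d^2 gamma | 2ab], show that [ht = h / d] lies in [N(Y)], is primitive there
   and has divisibility [gamma]; then the same fact applies.  Part (3) is a
   computation in coordinates [(w0, x, w2)] modulo [Q v]: orthogonality to [h]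
   and [v] forces [w = (a l, x, b l)] with [B(Ht, x) = 2abc l / d], and
   decomposing [x] in [N(X) = [Ht, K(Ht), gamma Ht^* + u^*(Ht)]] expresses
   [K(h)] through [K(Ht)] and [c u^*(Ht)]. *)

Lemma qintP (q : rat) : qint q <-> exists z : int, q = z%:~R.
Proof. by split=> [/intrP | [z ->]] //; apply: intr_int. Qed.

Lemma qint_gt0_ge1 (q : rat) : qint q -> 0 < q -> 1 <= q.
Proof. by move=> qi q0; rewrite -(gtr0_norm q0) norm_intr_ge1 // gt_eqF. Qed.

Section QintClosure.
Implicit Types x y : rat.
Lemma qint0 : qint 0. Proof. exact: rpred0. Qed.
Lemma qint_nat (k : nat) : qint k%:R. Proof. exact: natr_int. Qed.
Lemma qint_int (z : int) : qint z%:~R. Proof. exact: intr_int. Qed.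
Lemma qintD x y : qint x -> qint y -> qint (x + y). Proof. exact: rpredD. Qed.
Lemma qintB x y : qint x -> qint y -> qint (x - y). Proof. exact: rpredB. Qed.
Lemma qintM x y : qint x -> qint y -> qint (x * y). Proof. exact: rpredM. Qed.
Lemma qintN x : qint x -> qint (- x). Proof. by rewrite /qint rpredN. Qed.
End QintClosure.

Ltac int_closure := repeat first
  [ assumption | apply: qint0 | apply: qint_nat | apply: qint_int
  | apply: qintD | apply: qintB | apply: qintM | apply: qintN ].

Lemma bezoutz_qint (m k : int) : coprimez m k ->
  exists al be : rat, [/\ qint al, qint be & al * m%:~R + be * k%:~R = 1].
Proof.
move=> /eqP g1; have [u [v e]] := Bezoutz m k.
exists u%:~R, v%:~R; split; [exact: qint_int.. |].
by move: e => /(congr1 (intr : int -> rat)); rewrite g1 intrD !intrM.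
Qed.

Lemma bezout_qint (a b : nat) : coprime a b ->
  exists al be : rat, [/\ qint al, qint be & al * a%:R + be * b%:R = 1].
Proof.
move=> ab; have [al [be [al_int be_int e]]] : exists al be : rat,
    [/\ qint al, qint be & al * a%:~R + be * b%:~R = 1].
  by apply: bezoutz_qint; rewrite coprimezE !absz_nat.
by exists al, be.
Qed.

Lemma bezout_coefE (u x v y : rat) : x != 0 -> u * x + v * y = 1 -> u = (1 - v * y) / x.
Proof. by move=> x0 <-; field. Qed.

Lemma coprime_qint_dvd (c k : nat) (x y : rat) : coprime c k -> qint x -> qint y ->
  c%:R * x = k%:R * y -> exists2 z, qint z & x = k%:R * z.
Proof.
move=> /bezout_qint[u [w [u_int w_int uw1]]] x_int y_int cxky.
exists (u * y + w * x); first by int_closure.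
transitivity ((u * c%:R + w * k%:R) * x); first by rewrite uw1 mul1r.
by rewrite mulrDl -mulrA cxky; ring.
Qed.

Lemma eqz_mod_qint (m e : int) (k : nat) : (m = e %[mod k])%Z ->
  exists2 mu, qint mu & m%:~R = k%:R * mu + e%:~R :> rat.
Proof.
move/eqP; rewrite eqz_mod_dvd => /dvdzP[q /(congr1 (intr : int -> rat))].
rewrite intrB intrM => mek; exists q%:~R; first exact: qint_int.
by rewrite -[LHS](subrK e%:~R) mek mulrC.
Qed.

Section Transfer.
Variable V : lmodType rat.
Implicit Types (K : V -> Prop) (x y : V).

Lemma gen3_seteq L K (K1 : V -> Prop) x y : seteq K K1 -> seteq L (gen3 x K y) -> seteq L (gen3 x K1 y).
Proof.
move=> KK1 LK z; rewrite LK.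
by split=> -[i [j [k [/KK1 Kk e]]]]; exists i, j, k.
Qed.

Lemma order_mod_seteq K (K1 : V -> Prop) y k : seteq K K1 -> order_mod K y k -> order_mod K1 y k.
Proof. by move=> KK1 [k0 /KK1 Kky Kk]; split=> // k' /Kk; rewrite -KK1. Qed.

End Transfer.

(** * Integral lattices with a primitive vector *)

Section IntegralLattice.
Variables (V : lmodType rat) (B : V -> V -> rat) (L : V -> Prop).
Hypothesis Bsym : forall x y, B x y = B y x.
Hypothesis BD : forall x y z, B x (y + z) = B x y + B x z.
Hypothesis BZ : forall x q y, B x (q *: y) = q * B x y.
Hypothesis LD : forall x y, L x -> L y -> L (x + y).
Hypothesis LZ : forall q x, qint q -> L x -> L (q *: x).

Lemma BNr x y : B x (- y) = - B x y.
Proof. by rewrite -scaleN1r BZ mulN1r. Qed.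
Lemma BBr x y z : B x (y - z) = B x y - B x z.
Proof. by rewrite BD BNr. Qed.
Lemma BZl q x y : B (q *: x) y = q * B x y.
Proof. by rewrite Bsym BZ Bsym. Qed.
Lemma BBl x y z : B (x - y) z = B x z - B y z.
Proof. by rewrite Bsym BBr !(Bsym z). Qed.

Lemma LN x : L x -> L (- x).
Proof. by move=> Lx; rewrite -scaleN1r; apply: LZ => //; apply/qintN/qint_nat. Qed.
Lemma LB x y : L x -> L y -> L (x - y).
Proof. by move=> Lx Ly; apply: LD => //; apply: LN. Qed.
Lemma LZn (k : nat) x : L x -> L (k%:R *: x).
Proof. exact/LZ/qint_nat. Qed.
Lemma LZz (i : int) x : L x -> L (i%:~R *: x).
Proof. exact/LZ/qint_int. Qed.

Lemma Kperp_scale P (q : rat) : q != 0 -> seteq (Kperp B L (q *: P)) (Kperp B L P).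
Proof.
move=> q0 x; rewrite /Kperp BZl.
by split=> -[Lx /eqP]; rewrite ?mulf_eq0 ?(negbTE q0) => /eqP ->; rewrite ?mulr0.
Qed.

(* Bezout for [numq q] and [denq q] puts [P / denq q] in [L], so primitivity forces [denq q = 1]. *)
Lemma primitive_scale_int Rad P : primitive L Rad P -> forall q, L (q *: P) -> qint q.
Proof.
move=> [LP _ Pprim] q LqP.
have [u [w [u_int w_int uw1]]] : exists u w : rat,
    [/\ qint u, qint w & u * (numq q)%:~R + w * (denq q)%:~R = 1].
  by apply: bezoutz_qint; rewrite coprimezE coprime_num_den.
have den0 : (denq q)%:~R != 0 :> rat by rewrite intr_eq0 denq_neq0.
have Lx : L ((denq q)%:~R^-1 *: P).
  suff -> : (denq q)%:~R^-1 *: P = u *: (q *: P) + w *: P by apply: LD; apply: LZ.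
  rewrite scalerA -scalerDl -[in RHS](divq_num_den q); congr (_ *: _).
  by apply: (mulIf den0); rewrite mulVf // mulrDl -mulrA mulfVK.
have /(Pprim _ _ Lx) : P = `|denq q|%N%:R *: ((denq q)%:~R^-1 *: P).
  by rewrite scalerA natr_absz gtr0_norm ?denq_gt0 // mulfV ?scale1r.
move=> den1; rewrite -[q]divq_num_den -(gtz0_abs (denq_gt0 q)) den1 divr1.
exact: qint_int.
Qed.

Lemma primitive_of_scale_int Rad P : L P -> ~ Rad P -> P != 0 ->
  (forall q, L (q *: P) -> qint q) -> primitive L Rad P.
Proof.
move=> LP RP P0 Pprim; split=> // k x Lx Pkx.
have k0 : (0 < k)%N.
  by rewrite lt0n; apply: contraNneq P0; rewrite Pkx => ->; rewrite scale0r.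
have /Pprim /qint_gt0_ge1 : L (k%:R^-1 *: P).
  by rewrite Pkx scalerA mulVf ?scale1r // pnatr_eq0 -lt0n.
rewrite invr_gt0 ltr0n k0 invf_ge1 ?ltr0n // lern1 => /(_ isT) k1.
by apply/eqP; rewrite eqn_leq k1.
Qed.

Variables (P : V) (g : nat).
Hypothesis Lint : forall x y, L x -> L y -> qint (B x y).
Hypotheses (LP : L P) (P_gt0 : 0 < B P P) (gammaP : lat_gamma B L P g).

Lemma Pstar_dot : B P (Pstar B P) = 1.
Proof. by rewrite /Pstar BZ mulVf // gt_eqF. Qed.

Lemma lat_gamma_witness : exists x, L x /\ B P x = g%:R.
Proof. by apply/(proj2 gammaP); exists 1; rewrite mulr1. Qed.

Lemma lat_gamma_dvd x : L x -> exists z : int, B P x = g%:R * z%:~R.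
Proof. by move=> Lx; apply/(proj2 gammaP); exists x. Qed.

Lemma lat_gamma_norm : exists k : nat, (0 < k)%N /\ B P P = g%:R * k%:R.
Proof.
have [z Pz] := lat_gamma_dvd LP.
have z0 : 0 < z.
  by move: P_gt0; rewrite Pz pmulr_rgt0 ?ltr0z // ltr0n; case: gammaP.
by exists `|z|%N; split; [lia | rewrite Pz natr_absz gtr0_norm].
Qed.

Lemma is_ustar_orth u : is_ustar B L P g u -> B P u = 0.
Proof.
move=> [[[k [k0 [_ Pku]]] _] _]; move/eqP: Pku.
by rewrite BZ mulf_eq0 pnatr_eq0 (gtn_eqF k0) => /eqP.
Qed.

Lemma is_ustar_exists : exists u, is_ustar B L P g u.
Proof.
have [x [Lx Px]] := lat_gamma_witness.
have [k [k0 Pk]] := lat_gamma_norm.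
have [g0 _] := gammaP.
have gn : g%:R != 0 :> rat by rewrite pnatr_eq0 -lt0n.
have kn : k%:R != 0 :> rat by rewrite pnatr_eq0 -lt0n.
exists (x - g%:R *: Pstar B P); split; last by rewrite addrC subrK.
split=> [|y [Ly Py]]; last by rewrite BBl BZl /Pstar BZl Py !mulr0 subr0; apply: Lint.
exists k; split=> //; split; last by rewrite BZ BBr BZ Pstar_dot Px mulr1 subrr mulr0.
suff -> : k%:R *: (x - g%:R *: Pstar B P) = k%:R *: x - P by apply: LB => //; apply: LZn.
rewrite scalerBr /Pstar !scalerA Pk; congr (_ - _).
by rewrite -[RHS]scale1r; congr (_ *: _); field; rewrite gn kn.
Qed.

Section Ustar.
Variable u : V.
Hypothesis uP : is_ustar B L P g u.
Let y := g%:R *: Pstar B P + u.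

Lemma B_gen_ustar : B P y = g%:R.
Proof. by rewrite /y BD BZ Pstar_dot (is_ustar_orth uP) mulr1 addr0. Qed.

(* Every [z] splits as [j y + (z - j y)] with [B P z = g j]. *)
Lemma lattice_gen3_ustar : seteq L (gen3 P (Kperp B L P) y).
Proof.
have [_ Ly] := uP.
move=> z; split=> [Lz | [i [j [k [[Lk _] ->]]]]]; last first.
  by apply: LD; [apply: LD => //|]; apply: LZz.
have [j Pz] := lat_gamma_dvd Lz.
exists 0, j, (z - j%:~R *: y); rewrite scale0r add0r subrK; split=> //.
split; first by apply: LB => //; apply: LZz.
by rewrite BBr BZ B_gen_ustar Pz mulrC subrr.
Qed.

(* [k' u = k' y - (k'/k) P] with [P^2 = g k], so [k' u] lies in [K(P)] iff [k'/k] is integral. *)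
Lemma order_mod_ustar : (forall q, L (q *: P) -> qint q) ->
  exists k : nat, order_mod (Kperp B L P) u k /\ (k%:R : rat) = B P P / g%:R.
Proof.
move=> Pprim; have [_ Ly] := uP.
have [k [k0 Pk]] := lat_gamma_norm.
have [g0 _] := gammaP.
have gn : g%:R != 0 :> rat by rewrite pnatr_eq0 -lt0n.
have kn : k%:R != 0 :> rat by rewrite pnatr_eq0 -lt0n.
have ku q : q *: u = q *: y - (q / k%:R) *: P.
  rewrite /y scalerDr /Pstar !scalerA Pk addrAC -scalerBl.
  by rewrite [_ - _](_ : _ = 0) ?scale0r ?add0r //; field; rewrite kn gn.
exists k; split; last by rewrite Pk; field.
split=> //.
  split; last by rewrite BZ (is_ustar_orth uP) mulr0.
  by rewrite ku divff // scale1r; apply: LB => //; apply: LZn.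
move=> k' /andP[k'0 k'k] [Lk' _].
have : L ((k'%:R / k%:R) *: P).
  rewrite (_ : _ *: P = k'%:R *: y - k'%:R *: u); last by rewrite ku opprB addrC subrK.
  by apply: LB => //; apply: LZn.
move/Pprim/qint_gt0_ge1; rewrite divr_gt0 ?ltr0n // ler_pdivlMr ?ltr0n //.
by rewrite mul1r ler_nat leqNgt k'k => /(_ isT).
Qed.

End Ustar.
End IntegralLattice.

(** * Row vectors and the Mukai lattice *)

Section RowForms.
Variable m : nat.
Implicit Types (M : 'M[rat]_m) (x y z : 'rV[rat]_m).

Lemma bformD M x y z : bform M x (y + z) = bform M x y + bform M x z.
Proof. by rewrite /bform linearD /= mulmxDr mxE. Qed.
Lemma bformZ M x q y : bform M x (q *: y) = q * bform M x y.
Proof. by rewrite /bform linearZ /= -scalemxAr mxE. Qed.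
Lemma bformDl M x y z : bform M (x + y) z = bform M x z + bform M y z.
Proof. by rewrite /bform !mulmxDl mxE. Qed.
Lemma bformZl M q x y : bform M (q *: x) y = q * bform M x y.
Proof. by rewrite /bform -!scalemxAl mxE. Qed.
Lemma bformBr M x y z : bform M x (y - z) = bform M x y - bform M x z.
Proof. by rewrite bformD -scaleN1r bformZ mulN1r. Qed.
Lemma bformBl M x y z : bform M (x - y) z = bform M x z - bform M y z.
Proof. by rewrite bformDl -scaleN1r bformZl mulN1r. Qed.
Lemma bform0l M y : bform M 0 y = 0.
Proof. by rewrite /bform !mul0mx mxE. Qed.
Lemma bform0r M y : bform M y 0 = 0.
Proof. by rewrite /bform trmx0 mulmx0 mxE. Qed.

Lemma bform_sym M x y : M^T = M -> bform M x y = bform M y x.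
Proof.
move=> MT; have tr11 (A : 'M[rat]_1) : A 0 0 = A^T 0 0 by rewrite mxE.
by rewrite /bform tr11 !trmx_mul trmxK MT mulmxA.
Qed.

Lemma intvecD x y : intvec x -> intvec y -> intvec (x + y).
Proof. by move=> xi yi i; rewrite mxE; apply: rpredD; [exact: xi | exact: yi]. Qed.
Lemma intvecZ (q : rat) x : qint q -> intvec x -> intvec (q *: x).
Proof. by move=> qi xi i; rewrite mxE; apply: rpredM; [exact: qi | exact: xi]. Qed.
Lemma intvecB x y : intvec x -> intvec y -> intvec (x - y).
Proof. by move=> xi yi i; rewrite !mxE; apply: rpredB; [exact: xi | exact: yi]. Qed.
Lemma intvec0 : intvec (0 : 'rV[rat]_m).
Proof. by move=> i; rewrite mxE. Qed.

Lemma bform_int M x y : (forall i j, qint (M i j)) -> intvec x -> intvec y ->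
  qint (bform M x y).
Proof.
move=> Mi xi yi; rewrite /bform !mxE.
apply: rpred_sum => j _; rewrite !mxE; apply: rpredM; last exact: yi.
by apply: rpred_sum => i _; apply: rpredM; [exact: xi | exact: Mi].
Qed.

End RowForms.

Lemma intmx_int n (G : 'M[int]_n) i j : qint (intmx G i j).
Proof. by rewrite mxE; apply: intr_int. Qed.

Lemma intmx_sym n (G : 'M[int]_n) : G^T = G -> (intmx G)^T = intmx G.
Proof. by move=> GT; rewrite /intmx map_trmx GT. Qed.

Section MukaiVectors.
Variable n : nat.
Notation M := (@mukai_vec n).
Implicit Types (w : 'rV[rat]_(1 + n + 1)) (x y : 'rV[rat]_n).

Lemma mukai_vec_surj w : exists a x b, w = M a x b.
Proof.
exists (lsubmx (lsubmx w) 0 0), (rsubmx (lsubmx w)), (rsubmx w 0 0).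
by rewrite /mukai_vec -!mx11_scalar !hsubmxK.
Qed.

Lemma mukai_vecD a x b a' x' b' : M a x b + M a' x' b' = M (a + a') (x + x') (b + b').
Proof. by rewrite /mukai_vec !add_row_mx !raddfD. Qed.
Lemma mukai_vecZ q a x b : q *: M a x b = M (q * a) (q *: x) (q * b).
Proof. by rewrite /mukai_vec !scale_row_mx !scale_scalar_mx. Qed.
Lemma mukai_vecB a x b a' x' b' : M a x b - M a' x' b' = M (a - a') (x - x') (b - b').
Proof. by rewrite -!scaleN1r mukai_vecZ mukai_vecD !mulN1r. Qed.

Lemma mukai_vec_inj a x b a' x' b' : M a x b = M a' x' b' -> [/\ a = a', x = x' & b = b'].
Proof.
rewrite /mukai_vec => /eq_row_mx [/eq_row_mx [ea ->] eb].
by split=> //; [move/(congr1 (fun A : 'M[rat]_1 => A 0 0)): ea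
                | move/(congr1 (fun A : 'M[rat]_1 => A 0 0)): eb]; rewrite !mxE.
Qed.

Lemma intvec_mukai a x b : intvec (M a x b) <-> [/\ qint a, intvec x & qint b].
Proof.
split=> [Mi | [ai xi bi] i].
  split.
  - by have := Mi (lshift 1 (lshift n ord0)); rewrite /mukai_vec !row_mxEl mxE.
  - by move=> j; have := Mi (lshift 1 (rshift 1 j)); rewrite /mukai_vec row_mxEl row_mxEr.
  - by have := Mi (rshift (1 + n) ord0); rewrite /mukai_vec row_mxEr mxE.
rewrite -(splitK i) /mukai_vec; case: (split i) => [j|j] /=; last first.
  by rewrite row_mxEr (ord1 j) mxE.
rewrite row_mxEl -(splitK j); case: (split j) => [k|k] /=; last by rewrite row_mxEr.
by rewrite row_mxEl (ord1 k) mxE.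
Qed.

Lemma bform_mukai (G : 'M[rat]_n) a x b a' x' b' :
  bform (mukai_gram G) (M a x b) (M a' x' b') = - (a * b' + b * a') + bform G x x'.
Proof.
rewrite /bform /mukai_gram /mukai_vec.
rewrite !mul_row_block mul_row_col !mul_mx_row ?mulmx0 ?mul0mx ?addr0 ?add0r.
rewrite add_row_mx !tr_row_mx !mul_row_col ?addr0 ?add0r.
rewrite !mulmxN !mulmx1 !tr_scalar_mx !mulNmx !mxE !big_ord1 !mxE /= !mulr1n; ring.
Qed.

End MukaiVectors.

Section MukaiLattice.
Variables (n : nat) (G : 'M[int]_n).
Hypothesis Gsym : G^T = G.
Notation BX := (bform (intmx G)).
Notation BY := (bform (mukai_gram (intmx G))).
Notation M := (@mukai_vec n).

Lemma BX_sym x y : BX x y = BX y x.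
Proof. exact/bform_sym/intmx_sym. Qed.

Lemma BX_int x y : intvec x -> intvec y -> qint (BX x y).
Proof. exact: bform_int (@intmx_int _ G). Qed.

Lemma BY_sym w w' : BY w w' = BY w' w.
Proof.
have [a [x [b ->]]] := mukai_vec_surj w; have [a' [x' [b' ->]]] := mukai_vec_surj w'.
by rewrite !bform_mukai BX_sym; congr (_ + _); ring.
Qed.

Lemma BY_int w w' : intvec w -> intvec w' -> qint (BY w w').
Proof.
have [a [x [b ->]]] := mukai_vec_surj w; have [a' [x' [b' ->]]] := mukai_vec_surj w'.
move=> /intvec_mukai[ai xi bi] /intvec_mukai[ai' xi' bi'].
by rewrite bform_mukai; apply: qintD; [int_closure | apply: BX_int].
Qed.

Variable v : 'rV[rat]_(1 + n + 1).
Hypothesis v_isotropic : BY v v = 0.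
Notation NY := (NYlat (intmx G) v).

Lemma NYD w w' : NY w -> NY w' -> NY (w + w').
Proof.
move=> [vw [t wi]] [vw' [t' wi']]; split; first by rewrite bformD vw vw' addr0.
exists (t + t'); rewrite scalerDl opprD addrACA; exact: intvecD.
Qed.

Lemma NYZ (q : rat) w : qint q -> NY w -> NY (q *: w).
Proof.
move=> qi [vw [t wi]]; split; first by rewrite bformZ vw mulr0.
by exists (q * t); rewrite -scalerA -scalerBr; apply: intvecZ.
Qed.

Lemma NY_int w w' : NY w -> NY w' -> qint (BY w w').
Proof.
move=> [vw [t wi]] [vw' [t' wi']].
suff -> : BY w w' = BY (w - t *: v) (w' - t' *: v) by apply: BY_int.
by rewrite bformBr !bformBl !bformZ !bformZl v_isotropic (BY_sym w v) vw vw' !mulr0 !subr0.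
Qed.

Lemma NY_elim w : NY w -> exists t a x b,
  [/\ w = M a x b + t *: v, qint a, intvec x, qint b & BY v (M a x b) = 0].
Proof.
move=> [vw [t wi]]; exists t.
have [a [x [b wE]]] := mukai_vec_surj (w - t *: v).
move: wi; rewrite wE => /intvec_mukai[ai xi bi].
exists a, x, b; split=> //; first by rewrite -wE subrK.
by rewrite -wE bformBr vw bformZ v_isotropic mulr0 subr0.
Qed.

End MukaiLattice.

(** * The lattices [N(X)] and [N(Y)] *)

Lemma gcdn_split (r s : nat) : (0 < r)%N -> let c := gcdn r s in
  [/\ (0 < c)%N, r = (r %/ c * c)%N, s = (s %/ c * c)%N & coprime (r %/ c) (s %/ c)].
Proof.
move=> r_gt0 c; have c_gt0 : (0 < c)%N by rewrite gcdn_gt0 r_gt0.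
have rE : r = (r %/ c * c)%N by rewrite divnK ?dvdn_gcdl.
have sE : s = (s %/ c * c)%N by rewrite divnK ?dvdn_gcdr.
split=> //.
by rewrite /coprime -(eqn_pmul2r c_gt0) mul1n muln_gcdl -rE -sE.
Qed.

Lemma dvdn_gamma_norm (a b c d g k : nat) : (0 < d)%N -> coprime c (d * g) ->
  g%:R * k%:R = 2 * a%:R * b%:R * c%:R * c%:R / (d%:R * d%:R) :> rat ->
  (d * d * g %| 2 * a * b)%N.
Proof.
move=> d_gt0 cop e.
have cop2 : coprime (d * d * g) (c * c).
  by move: cop; rewrite coprime_sym !coprimeMl !coprimeMr => /andP[-> ->].
rewrite -(Gauss_dvdl _ cop2) (_ : (2 * a * b * (c * c) = d * d * g * k)%N).
  exact: dvdn_mulr (dvdnn _).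
have d_neq0 : d%:R != 0 :> rat by rewrite pnatr_eq0 -lt0n.
apply/eqP; rewrite -(eqr_nat rat) !natrM; apply/eqP; rewrite -[RHS]mulrA e; field.
by rewrite d_neq0.
Qed.

Section K3Setting.
Variables (n : nat) (G : 'M[int]_n) (Ht : 'rV[rat]_n) (a b c d g N : nat).
Hypothesis Gsym : G^T = G.
Hypotheses (a_gt0 : (0 < a)%N) (b_gt0 : (0 < b)%N) (c_gt0 : (0 < c)%N) (d_gt0 : (0 < d)%N).
Hypotheses (coprime_ab : coprime a b) (coprime_cd : coprime c d) (coprime_cg : coprime c g).
Hypothesis abN : (2 * a * b = N * (d * d * g))%N.

Notation BX := (bform (intmx G)).
Notation BY := (bform (mukai_gram (intmx G))).
Notation M := (@mukai_vec n).
Notation v := (M (a * c)%N%:R (d%:R *: Ht) (b * c)%N%:R).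
Notation h := (M (- a%:R) 0 b%:R).
Notation ht := (d%:R^-1 *: h).
Notation NY := (NYlat (intmx G) v).

Hypothesis Ht_int : intvec Ht.
Hypothesis Ht_prim : forall q, intvec (q *: Ht) -> qint q.
Hypothesis gammaX : lat_gamma BX (@intvec n) Ht g.
Hypothesis Ht_norm : BX Ht Ht = 2 * a%:R * b%:R * c%:R * c%:R / (d%:R * d%:R).

Let g_gt0 : (0 < g)%N. Proof. by case: gammaX. Qed.
Let a_neq0 : a%:R != 0 :> rat. Proof. by rewrite pnatr_eq0 -lt0n. Qed.
Let b_neq0 : b%:R != 0 :> rat. Proof. by rewrite pnatr_eq0 -lt0n. Qed.
Let c_neq0 : c%:R != 0 :> rat. Proof. by rewrite pnatr_eq0 -lt0n. Qed.
Let d_neq0 : d%:R != 0 :> rat. Proof. by rewrite pnatr_eq0 -lt0n. Qed.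
Let g_neq0 : g%:R != 0 :> rat. Proof. by rewrite pnatr_eq0 -lt0n. Qed.

Lemma N_ratE : N%:R = 2 * a%:R * b%:R / (d%:R * d%:R * g%:R) :> rat.
Proof.
have /(congr1 (fun k : nat => k%:R : rat)) := abN; rewrite !natrM => ->.
by field; rewrite d_neq0 g_neq0.
Qed.

Lemma Ht_norm_gt0 : 0 < BX Ht Ht.
Proof.
by rewrite Ht_norm; apply: divr_gt0; rewrite -!natrM ltr0n !muln_gt0 ?a_gt0 ?b_gt0 ?c_gt0 ?d_gt0.
Qed.

Lemma v_isotropic : BY v v = 0.
Proof. by rewrite bform_mukai bformZ bformZl Ht_norm !natrM; field; rewrite d_neq0. Qed.

Lemma BY_v_iota y : BY v (iotaY y) = d%:R * BX Ht y.
Proof. by rewrite /iotaY bform_mukai bformZl; ring. Qed.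
Lemma BY_h_iota y : BY h (iotaY y) = 0.
Proof. by rewrite /iotaY bform_mukai bform0l; ring. Qed.
Lemma BY_h_v : BY h v = 0.
Proof. by rewrite bform_mukai bform0l !natrM; ring. Qed.
Lemma BY_v_h : BY v h = 0.
Proof. by rewrite bform_mukai bform0r !natrM; ring. Qed.
Lemma BY_h_h : BY h h = (2 * a * b)%N%:R.
Proof. by rewrite bform_mukai bform0l !natrM; ring. Qed.
Lemma BY_ht_ht : BY ht ht = 2 * a%:R * b%:R / (d%:R * d%:R).
Proof. by rewrite bformZ bformZl BY_h_h !natrM; field; rewrite d_neq0. Qed.
Lemma BY_ht_ht_gt0 : 0 < BY ht ht.
Proof.
by rewrite BY_ht_ht; apply: divr_gt0; rewrite -!natrM ltr0n !muln_gt0 ?a_gt0 ?b_gt0 ?d_gt0.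
Qed.

Lemma NY_h : NY h.
Proof.
split; first exact: BY_v_h.
by exists 0; rewrite scale0r subr0; apply/intvec_mukai; split; int_closure; apply: intvec0.
Qed.

(* With [e = be b - al a] and [al a + be b = 1]: [a (1 + e) = 2ab be] and
   [b (1 - e) = 2ab al] are divisible by [d], since [d^2 | 2ab]. *)
Lemma NY_ht : NY ht.
Proof.
split; first by rewrite bformZ BY_v_h mulr0.
have [al [be [al_int be_int ab1]]] := bezout_qint coprime_ab.
have [c' [la [c'_int la_int cd1]]] := bezout_qint coprime_cd.
have c'E := bezout_coefE c_neq0 cd1.
set e := be * b%:R - al * a%:R.
have e_int : qint e by rewrite /e; int_closure.
exists (c' * e / d%:R).
rewrite !mukai_vecZ mukai_vecB; apply/intvec_mukai; split.
- have alE := bezout_coefE a_neq0 ab1.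
  rewrite (_ : _ - _ = - (d%:R * g%:R * N%:R * be - a%:R * la * e)); first by int_closure.
  by rewrite /e c'E alE N_ratE !natrM; field; rewrite d_neq0 c_neq0 a_neq0 g_neq0.
- rewrite scaler0 sub0r scalerA -scaleNr divfK //.
  by apply: intvecZ => //; int_closure.
- have beE := bezout_coefE b_neq0 (etrans (addrC _ _) ab1).
  rewrite (_ : _ - _ = d%:R * g%:R * N%:R * al + b%:R * la * e); first by int_closure.
  by rewrite /e c'E beE N_ratE !natrM; field; rewrite d_neq0 c_neq0 b_neq0 g_neq0.
Qed.

(* If [q ht - t v] is integral then so is [t d] (by primitivity of [Ht]), and
   [q = -al d A + be d B - t d c (al a - be b)] for its integral first and last entries [A], [B]. *)
Lemma ht_scale_int q : NY (q *: ht) -> qint q.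
Proof.
move=> [_ [t]]; rewrite scalerA !mukai_vecZ mukai_vecB => /intvec_mukai[A_int x_int B_int].
have td_int : qint (t * d%:R).
  rewrite -[t * _]opprK; apply/qintN/Ht_prim.
  by move: x_int; rewrite scaler0 sub0r scalerA scaleNr.
have [al [be [al_int be_int ab1]]] := bezout_qint coprime_ab.
set A := _ - _ in A_int; set B := _ - _ in B_int.
have alE := bezout_coefE a_neq0 ab1.
rewrite (_ : q = - al * d%:R * A + be * d%:R * B - t * d%:R * c%:R * (al * a%:R - be * b%:R)).
  by int_closure.
by rewrite /A /B alE !natrM; field; rewrite d_neq0 a_neq0.
Qed.

Lemma ht_notin_lineQ : ~ lineQ v ht.
Proof.
move=> [t]; rewrite !mukai_vecZ => /mukai_vec_inj[e1 _ e3].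
have /eqP : (d%:R^-1 * - a%:R) * b%:R - (d%:R^-1 * b%:R) * a%:R = 0 :> rat.
  by rewrite e1 e3 !natrM; ring.
rewrite (_ : _ - _ = - (2 * a%:R * b%:R / d%:R)); last by ring.
by apply/negP; rewrite oppr_eq0 !mulf_neq0 ?invr_eq0...
Qed.

Lemma ht_primitive : primitive NY (lineQ v) ht.
Proof.
apply: primitive_of_scale_int ht_scale_int; [exact: NY_ht | exact: ht_notin_lineQ |].
by apply: contra_not_neq ht_notin_lineQ => ->; exists 0; rewrite scale0r.
Qed.

(* [B(v, w) = 0] gives [c (a p2 + b p0) = d B(Ht, x) = d g m], so [dg | a p2 + b p0];
   Bezout for [a, b] and [2ab = d^2 g N] then make [(a p2 - b p0) / d] a multiple of [g]. *)
Lemma BY_ht_dvd_gamma w : NY w -> exists z : int, BY ht w = g%:R * z%:~R.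
Proof.
move=> /(NY_elim v_isotropic)[t [p0 [x [p2 [-> p0_int x_int p2_int vw]]]]].
rewrite bformZl bformD bformZ BY_h_v mulr0 addr0 bform_mukai bform0l.
move: vw; rewrite bform_mukai bformZl => vw.
have [m xm] := lat_gamma_dvd gammaX x_int.
have [m' m'_int pm'] : exists2 m', qint m' & a%:R * p2 + b%:R * p0 = (d * g)%N%:R * m'.
  apply: (coprime_qint_dvd (c := c)) (qint_int m) _; first by rewrite coprimeMr coprime_cd.
    by int_closure.
  by rewrite natrM -mulrA -xm; move/eqP: vw; rewrite addrC subr_eq0 => /eqP ->; rewrite !natrM; ring.
have [al [be [al_int be_int ab1]]] := bezout_qint coprime_ab.
have /qintP[z zE] : qint (al * (2 * a%:R * m' - d%:R * N%:R * p0) + be * d%:R * N%:R * p2 - m').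
  by int_closure.
exists z; rewrite -zE.
have alE := bezout_coefE a_neq0 ab1.
have p0E : p0 = ((d * g)%N%:R * m' - a%:R * p2) / b%:R by rewrite -pm'; field.
by rewrite alE p0E N_ratE !natrM; field; rewrite d_neq0 a_neq0 b_neq0 g_neq0.
Qed.

Lemma BY_ht_witness : exists2 w, NY w & BY ht w = g%:R.
Proof.
have [x0 [x0_int x0g]] := lat_gamma_witness gammaX.
have [al [be [al_int be_int ab1]]] := bezout_qint coprime_ab.
have alE := bezout_coefE a_neq0 ab1.
exists (M (- (d%:R * g%:R * be)) ((c%:R * (al * a%:R - be * b%:R)) *: x0) (d%:R * g%:R * al)).
  split; first by rewrite bform_mukai bformZ bformZl x0g alE !natrM; field.
  exists 0; rewrite scale0r subr0; apply/intvec_mukai; split; try by int_closure.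
  by apply: intvecZ => //; int_closure.
by rewrite bformZl bform_mukai bform0l alE; field; rewrite d_neq0 a_neq0.
Qed.

Lemma lat_gamma_ht : lat_gamma BY NY ht g.
Proof.
split=> // q; split=> [[w [NYw <-]] | [z ->]]; first exact: BY_ht_dvd_gamma.
have [w NYw wg] := BY_ht_witness.
exists (z%:~R *: w); split; first exact: NYZ (qint_int z) NYw.
by rewrite bformZ wg mulrC.
Qed.

Notation KX := (Kperp BX (@intvec n) Ht).
Notation KY := (Kperp BY NY h).

Lemma iotaY_KX k : KX k -> KY (iotaY k).
Proof.
move=> [k_int Htk]; split; last exact: BY_h_iota.
split; first by rewrite BY_v_iota Htk mulr0.
exists 0; rewrite scale0r subr0; apply/intvec_mukai.
by split=> //; apply: qint_nat.
Qed.

Lemma qspan_iotaY_KX y (t : rat) : qspan KX y -> qspan KY (iotaY y + t *: v).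
Proof.
move=> [k [k_gt0 [ky_int Htky]]].
have k_neq0 : k%:R != 0 :> rat by rewrite pnatr_eq0 -lt0n.
have Hty : BX Ht y = 0.
  by move/eqP: Htky; rewrite bformZ mulf_eq0 (negbTE k_neq0) => /eqP.
exists k; split=> //; split.
  split; first by rewrite bformZ bformD bformZ BY_v_iota Hty v_isotropic; ring.
  exists (k%:R * t); rewrite scalerDr scalerA addrK /iotaY mukai_vecZ.
  by apply/intvec_mukai; split; rewrite ?mulr0 //; apply: qint_nat.
by rewrite bformZ bformD bformZ BY_h_iota BY_h_v; ring.
Qed.

(* For [z = (z0, x, z2)] orthogonal to [h] and [v] one has [z2 = b z0 / a], and
   [z = iota (x - t d Ht) + t v] with [t = z0 / (ac)]. *)
Lemma qspan_KY_iotaY z : qspan KY z -> exists y (t : rat), qspan KX y /\ z = iotaY y + t *: v.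
Proof.
have [z0 [x [z2 ->]]] := mukai_vec_surj z.
move=> [k [k_gt0 [[vz [t0 z_int]] hz]]].
have k_neq0 : k%:R != 0 :> rat by rewrite pnatr_eq0 -lt0n.
move: hz; rewrite bformZ bform_mukai bform0l => /eqP.
rewrite mulf_eq0 (negbTE k_neq0) /= => /eqP hz.
have z2E : z2 = b%:R * z0 / a%:R.
  move/eqP: hz; rewrite addr0 oppr_eq0 mulNr addrC subr_eq0 => /eqP ->.
  by rewrite (mulrC a%:R) mulfK.
move: vz; rewrite bformZ bform_mukai bformZl => /eqP.
rewrite mulf_eq0 (negbTE k_neq0) /= => /eqP vz.
have HtxE : BX Ht x = ((a * c)%N%:R * z2 + (b * c)%N%:R * z0) / d%:R.
  apply: (mulfI d_neq0); rewrite mulrCA mulfV // mulr1.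
  by move/eqP: vz; rewrite addrC subr_eq0 => /eqP.
move: z_int; rewrite !mukai_vecZ mukai_vecB => /intvec_mukai[z0_int x_int z2_int].
exists (x - (z0 / (a * c)%N%:R) *: (d%:R *: Ht)), (z0 / (a * c)%N%:R); split.
  exists (k * a * c)%N; split; first by rewrite !muln_gt0 k_gt0 a_gt0 c_gt0.
  split.
    rewrite [X in intvec X](_ : _ = (a * c)%N%:R *: (k%:R *: x - t0 *: (d%:R *: Ht))
                          - (k%:R * z0 - t0 * (a * c)%N%:R) *: (d%:R *: Ht)).
      by apply: intvecB; apply: intvecZ => //; [apply: qint_nat | apply: intvecZ => //; apply: qint_nat].
    by apply/rowP => l; rewrite !mxE !natrM; field; rewrite a_neq0 c_neq0.
  rewrite bformZ bformBr !bformZ Ht_norm HtxE z2E !natrM; field.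
  by rewrite a_neq0 c_neq0 d_neq0.
rewrite /iotaY !mukai_vecZ mukai_vecD; congr mukai_vec.
- by rewrite !natrM; field; rewrite a_neq0 c_neq0.
- by rewrite subrK.
- by rewrite z2E !natrM; field; rewrite a_neq0 c_neq0.
Qed.

Lemma KY_elim z : KY z -> exists t la x,
  [/\ z = M (a%:R * la) x (b%:R * la) + t *: v, qint la, intvec x
    & BX Ht x = 2 * a%:R * b%:R * c%:R * la / d%:R].
Proof.
move=> [/(NY_elim v_isotropic)[t [p0 [x [p2 [-> p0_int x_int p2_int vp]]]]]].
rewrite bformD bformZ BY_h_v mulr0 addr0 bform_mukai bform0l.
move=> /eqP; rewrite addr0 oppr_eq0 mulNr addrC subr_eq0 => /eqP ap2.
have [al [be [al_int be_int ab1]]] := bezout_qint coprime_ab.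
have p2E : p2 = b%:R * p0 / a%:R by rewrite ap2 (mulrC a%:R) mulfK.
have alE := bezout_coefE a_neq0 ab1.
set la := al * p0 + be * p2.
have p0E : p0 = a%:R * la by rewrite /la p2E alE; field.
have {}p2E : p2 = b%:R * la by rewrite p2E p0E; field.
exists t, la, x; split=> //; first by rewrite -p0E -p2E.
  by rewrite /la; int_closure.
apply: (mulfI d_neq0); move/eqP: vp; rewrite bform_mukai bformZl addrC subr_eq0 => /eqP ->.
by rewrite p0E p2E !natrM; field.
Qed.

Section UstarX.
Variable uX : 'rV[rat]_n.
Hypothesis uX_ustar : is_ustar BX (@intvec n) Ht g uX.
Notation F := (iotaY (((2 * a * b)%N%:R / (d * d * g)%N%:R * c%:R) *: uX)).

Let Ht_uX : BX Ht uX = 0. Proof. exact: (is_ustar_orth (@bformZ _ _) uX_ustar). Qed.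

(* Write [x = i Ht + k + j (g Ht^* + uX)] in [N(X)]; the coefficient of [F] is [la d - i c]. *)
Lemma KY_sub_gen3 z : KY z -> exists k (i : int) (t : rat), KX k /\ z = iotaY k + i%:~R *: F + t *: v.
Proof.
move=> /KY_elim[t [la [x [-> la_int x_int Htx]]]].
have [i [j [k [[k_int Htk] xE]]]] :=
  proj1 (lattice_gen3_ustar (@bformD _ _) (@bformZ _ _) (@intvecD n) (@intvecZ n)
           Ht_int Ht_norm_gt0 gammaX uX_ustar x) x_int.
have jE : j%:~R = (2 * a%:R * b%:R * c%:R * la / d%:R - i%:~R * BX Ht Ht) / g%:R :> rat.
  rewrite -Htx xE !(bformD, bformZ) Htk Ht_uX; field.
  by rewrite g_neq0 (gt_eqF Ht_norm_gt0).
have /qintP[ii iiE] : qint (la * d%:R - i%:~R * c%:R) by int_closure.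
exists k, ii, (t + la / c%:R); split=> //.
rewrite xE -iiE /iotaY !mukai_vecZ !mukai_vecD; congr mukai_vec.
- by rewrite !natrM; field.
- apply/rowP => l; rewrite !mxE jE /Pstar Ht_norm ?mxE !natrM; field.
  by rewrite a_neq0 b_neq0 c_neq0 d_neq0 g_neq0.
- by rewrite !natrM; field.
Qed.

(* [N c uX = N c (g Ht^* + uX) - Ht / c], and with [c' c + la d = 1] the multiple
   [(i la / c) v] cancels the fractional part [i Ht / c]. *)
Lemma gen3_sub_KY k (i : int) (t : rat) : KX k -> KY (iotaY k + i%:~R *: F + t *: v).
Proof.
move=> [k_int Htk].
split; last by rewrite !bformD !bformZ !BY_h_iota BY_h_v; ring.
split; first by rewrite !bformD !bformZ !BY_v_iota Htk bformZ Ht_uX v_isotropic; ring.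
have [c' [la [c'_int la_int cd1]]] := bezout_qint coprime_cd.
have c'E := bezout_coefE c_neq0 cd1.
pose l0 := i%:~R * la.
pose x := (- (i%:~R * c')) *: Ht + k + (i%:~R * N%:R * c%:R) *: (g%:R *: Pstar BX Ht + uX).
exists (t - l0 / c%:R).
rewrite (_ : _ - _ = M (a%:R * l0) x (b%:R * l0)).
  apply/intvec_mukai; split; try by rewrite /l0; int_closure.
  rewrite /x; apply: intvecD; last by apply: intvecZ; [int_closure | case: uX_ustar].
  by apply: intvecD => //; apply: intvecZ => //; int_closure.
rewrite /iotaY !mukai_vecZ !mukai_vecD mukai_vecB; congr mukai_vec.
- by rewrite !natrM; field.
- apply/rowP => l; rewrite /x /l0 /Pstar Ht_norm c'E N_ratE !mxE !natrM; field.
  by rewrite a_neq0 b_neq0 c_neq0 d_neq0 g_neq0.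
- by rewrite !natrM; field.
Qed.

Lemma KY_gen3 : seteq KY (fun z => exists k (i : int) (t : rat), KX k /\ z = iotaY k + i%:~R *: F + t *: v).
Proof. by move=> z; split=> [/KY_sub_gen3 | [k [i [t [KXk ->]]]]] //; apply: gen3_sub_KY. Qed.

(* With [uY = w - g ht^*] and [uX = yX - g Ht^*] for integral [w], [yX], and
   [m = 2a mu - 1 = 2b nu + 1], the vector below is [w - m c iota(yX) - gd (nu, 0, mu)]. *)
Lemma ustarY_ustarX_KY uY (m : int) : is_ustar BY NY ht g uY ->
  (m = -1 %[mod (2 * a)%N])%Z -> (m = 1 %[mod (2 * b)%N])%Z ->
  KY (uY - iotaY ((m%:~R * c%:R) *: uX)).
Proof.
move=> uY_ustar /eqz_mod_qint[mu mu_int mE] /eqz_mod_qint[nu nu_int mE'].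
have h_uY : BY h uY = 0.
  move/eqP: (is_ustar_orth (@bformZ _ _) uY_ustar); rewrite bformZl mulf_eq0 invr_eq0.
  by rewrite (negbTE d_neq0) => /eqP.
have v_uY : BY v uY = 0.
  have [[[k [k_gt0 [[/eqP vkuY _] _]]] _] _] := uY_ustar.
  by move: vkuY; rewrite bformZ mulf_eq0 pnatr_eq0 (gtn_eqF k_gt0) => /eqP.
have [_ /(NY_elim v_isotropic)[tW [p0 [x [p2 [wE p0_int x_int p2_int _]]]]]] := uY_ustar.
have uYE : uY = M p0 x p2 + tW *: v - g%:R *: Pstar BY ht by rewrite -wE addrC addKr.
have [_ yX_int] := uX_ustar.
have uXE : uX = (g%:R *: Pstar BX Ht + uX) - g%:R *: Pstar BX Ht by rewrite addrC addKr.
split; last by rewrite bformBr BY_h_iota h_uY subr0.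
split; first by rewrite bformBr BY_v_iota bformZ Ht_uX v_uY; ring.
exists (tW + m%:~R * g%:R * d%:R / (2 * a%:R * b%:R * c%:R)).
rewrite (_ : _ - _ = M p0 x p2 - iotaY ((m%:~R * c%:R) *: (g%:R *: Pstar BX Ht + uX))
                     + M (- (g%:R * d%:R * nu)) 0 (- (g%:R * d%:R * mu))).
  apply: intvecD; first apply: intvecB.
  - exact/intvec_mukai.
  - by apply/intvec_mukai; split; [exact: qint0 | apply: intvecZ => //; int_closure | exact: qint0].
  - by apply/intvec_mukai; split; [int_closure | apply: intvec0 | int_closure].
rewrite {1}uYE {1}uXE /Pstar BY_ht_ht /iotaY.
do 10 rewrite ?mukai_vecZ ?mukai_vecB ?mukai_vecD; congr mukai_vec.
- by rewrite mE' !natrM; field; rewrite a_neq0 b_neq0 c_neq0 d_neq0.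
- apply/rowP => l; rewrite Ht_norm !mxE ?natrM; field.
  by rewrite a_neq0 b_neq0 c_neq0 d_neq0.
- by rewrite mE !natrM; field; rewrite a_neq0 b_neq0 c_neq0 d_neq0.
Qed.

End UstarX.

Lemma NX_structure :
  [/\ Pstar BX Ht = ((d * d)%N%:R / (2 * a * b * (c * c))%N%:R) *: Ht,
      (exists u, is_ustar BX (@intvec n) Ht g u)
    & forall u, is_ustar BX (@intvec n) Ht g u ->
        seteq (@intvec n) (gen3 Ht KX (g%:R *: Pstar BX Ht + u)) /\
        exists k : nat, order_mod KX u k /\
                        (k%:R : rat) = (2 * a * b * (c * c))%N%:R / (d * d * g)%N%:R].
Proof.
split=> [| | u uX].
- rewrite /Pstar Ht_norm; congr (_ *: _); rewrite !natrM; field.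
  by rewrite a_neq0 b_neq0 c_neq0 d_neq0.
- exact (is_ustar_exists (BX_sym Gsym) (@bformD _ _) (@bformZ _ _) (@intvecD n) (@intvecZ n)
    (@BX_int _ G) Ht_int Ht_norm_gt0 gammaX).
split.
  exact (lattice_gen3_ustar (@bformD _ _) (@bformZ _ _) (@intvecD n) (@intvecZ n)
    Ht_int Ht_norm_gt0 gammaX uX).
have [k [ord_k kE]] := order_mod_ustar (@bformZ _ _) (@intvecD n) (@intvecZ n)
  Ht_int Ht_norm_gt0 gammaX uX Ht_prim.
exists k; split=> //; rewrite kE Ht_norm !natrM; field.
by rewrite d_neq0 g_neq0.
Qed.

Lemma NY_structure :
  [/\ [/\ NY h, BY h h = (2 * a * b)%N%:R, NY ht & primitive NY (lineQ v) ht],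
      lat_gamma BY NY ht g,
      Pstar BY ht = ((d * d)%N%:R / (2 * a * b)%N%:R) *: ht,
      (exists u, is_ustar BY NY ht g u)
    & forall u, is_ustar BY NY ht g u ->
        seteq NY (gen3 ht KY (g%:R *: Pstar BY ht + u)) /\
        exists k : nat, order_mod KY u k /\
                        (k%:R : rat) = (2 * a * b)%N%:R / (d * d * g)%N%:R].
Proof.
have KY_ht : seteq (Kperp BY NY ht) KY.
  exact (Kperp_scale NY (BY_sym Gsym) (@bformZ _ _) h (invr_neq0 d_neq0)).
split=> [| | | | u uY].
- split; [exact: NY_h | exact: BY_h_h | exact: NY_ht | exact: ht_primitive].
- exact: lat_gamma_ht.
- rewrite /Pstar BY_ht_ht; congr (_ *: _); rewrite !natrM; field.
  by rewrite a_neq0 b_neq0 d_neq0.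
- exact (is_ustar_exists (BY_sym Gsym) (@bformD _ _) (@bformZ _ _) (@NYD _ _ _) (@NYZ _ _ _)
    (NY_int Gsym v_isotropic) NY_ht BY_ht_ht_gt0 lat_gamma_ht).
split.
  apply: gen3_seteq KY_ht _.
  exact (lattice_gen3_ustar (@bformD _ _) (@bformZ _ _) (@NYD _ _ _) (@NYZ _ _ _)
    NY_ht BY_ht_ht_gt0 lat_gamma_ht uY).
have [k [ord_k kE]] := order_mod_ustar (@bformZ _ _) (@NYD _ _ _) (@NYZ _ _ _)
  NY_ht BY_ht_ht_gt0 lat_gamma_ht uY ht_scale_int.
exists k; split; first exact: order_mod_seteq KY_ht ord_k.
by rewrite kE BY_ht_ht !natrM; field; rewrite d_neq0 g_neq0.
Qed.

Lemma KY_structure :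
  [/\ (forall k, KX k -> KY (iotaY k)),
      seteq (qspan KY) (fun z => exists y (t : rat), qspan KX y /\ z = iotaY y + t *: v)
    & forall (uX : 'rV[rat]_n) (uY : 'rV[rat]_(1 + n + 1)) (m : int),
        is_ustar BX (@intvec n) Ht g uX -> is_ustar BY NY ht g uY ->
        (m = -1 %[mod (2 * a)%N])%Z -> (m = 1 %[mod (2 * b)%N])%Z ->
        seteq KY (fun z => exists k (i : int) (t : rat), KX k /\
                    z = iotaY k
                        + i%:~R *: iotaY (((2 * a * b)%N%:R / (d * d * g)%N%:R * c%:R) *: uX)
                        + t *: v) /\
        KY (uY - iotaY ((m%:~R * c%:R) *: uX))].
Proof.
split=> [| z | uX uY m uX_ustar uY_ustar ma mb]; first exact: iotaY_KX.
  by split=> [/qspan_KY_iotaY | [y [t [KXy ->]]]] //; apply: qspan_iotaY_KX.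
by split; [exact: KY_gen3 | exact: ustarY_ustarX_KY].
Qed.

End K3Setting.

Unset Implicit Arguments. Set Strict Implicit. Set Printing Implicit Defensive.

Theorem proposition2p3p1 (n : nat) (G : 'M[int]_n) (H : 'rV[rat]_n) (r s d g : nat) :
  G^T = G -> (forall i, (2 %| G i i)%Z) -> \det G != 0 ->
  (0 < r)%N -> (0 < s)%N -> (0 < d)%N ->
  intvec H -> bform (intmx G) H H = (2 * r * s)%N%:R ->
  primitive (@intvec n) (@zero_set _) ((d%:R)^-1 *: H) ->
  primitive (@intvec _) (@zero_set _)
            (mukai_vec r%:R H s%:R) ->
  lat_gamma (bform (intmx G)) (@intvec n) ((d%:R)^-1 *: H) g ->
  coprime (gcdn r s) (d * g) ->
  let BX := bform (intmx G) in
  let NX := @intvec n in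
  let Ht := (d%:R)^-1 *: H in
  let KX := Kperp BX NX Ht in
  let c := gcdn r s in
  let a := (r %/ c)%N in
  let b := (s %/ c)%N in
  let v := mukai_vec r%:R H s%:R in
  let BY := bform (mukai_gram (intmx G)) in
  let NY := NYlat (intmx G) v in
  let h := mukai_vec (- a%:R) 0 b%:R in
  let ht := (d%:R)^-1 *: h in
  let KY := Kperp BY NY h in
  (* (1) *)
  [/\ Pstar BX Ht = ((d * d)%N%:R / (2 * a * b * (c * c))%N%:R) *: Ht,
      (exists u, is_ustar BX NX Ht g u)
    & forall u, is_ustar BX NX Ht g u ->
        seteq NX (gen3 Ht KX (g%:R *: Pstar BX Ht + u)) /\
        exists k : nat, order_mod KX u k /\
                        (k%:R : rat) = (2 * a * b * (c * c))%N%:R / (d * d * g)%N%:R]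
  /\
  (* (2) *)
  [/\ [/\ NY h, BY h h = (2 * a * b)%N%:R, NY ht & primitive NY (lineQ v) ht],
      lat_gamma BY NY ht g,
      Pstar BY ht = ((d * d)%N%:R / (2 * a * b)%N%:R) *: ht,
      (exists u, is_ustar BY NY ht g u)
    & forall u, is_ustar BY NY ht g u ->
        seteq NY (gen3 ht KY (g%:R *: Pstar BY ht + u)) /\
        exists k : nat, order_mod KY u k /\
                        (k%:R : rat) = (2 * a * b)%N%:R / (d * d * g)%N%:R]
  /\
  (* (3) *)
  [/\ (forall k, KX k -> KY (iotaY k)),
      (seteq (qspan KY) (fun z => exists y (t : rat), qspan KX y /\ z = iotaY y + t *: v))
    & forall (uX : 'rV[rat]_n) (uY : 'rV[rat]_(1 + n + 1)) (m : int),
        is_ustar BX NX Ht g uX -> is_ustar BY NY ht g uY ->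
        (m = -1 %[mod (2 * a)%N])%Z -> (m = 1 %[mod (2 * b)%N])%Z ->
        seteq KY (fun z => exists k (i : int) (t : rat), KX k /\
                    z = iotaY k
                        + i%:~R *: iotaY (((2 * a * b)%N%:R / (d * d * g)%N%:R * c%:R) *: uX)
                        + t *: v) /\
        KY (uY - iotaY ((m%:~R * c%:R) *: uX))].
Proof.
move=> Gsym _ _ r_gt0 s_gt0 d_gt0 _ HH Ht_primitive _ gammaX cop BX NX Ht KX c a b v BY NY h ht KY.
have [c_gt0 rE sE coprime_ab] := gcdn_split s r_gt0.
have [coprime_cd coprime_cg] : coprime c d /\ coprime c g by apply/andP; rewrite -coprimeMr.
have a_gt0 : (0 < a)%N by move: r_gt0; rewrite rE muln_gt0 => /andP[].
have b_gt0 : (0 < b)%N by move: s_gt0; rewrite sE muln_gt0 => /andP[].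
have d_neq0 : d%:R != 0 :> rat by rewrite pnatr_eq0 -lt0n.
have HE : H = d%:R *: Ht by rewrite /Ht scalerA mulfV ?scale1r.
have Ht_norm : BX Ht Ht = 2 * a%:R * b%:R * c%:R * c%:R / (d%:R * d%:R).
  have [rE' sE'] : r%:R = a%:R * c%:R :> rat /\ s%:R = b%:R * c%:R :> rat.
    by rewrite -!natrM -rE -sE.
  move: HH; rewrite HE bformZ bformZl !natrM rE' sE' => HH.
  by apply: (mulfI d_neq0); apply: (mulfI d_neq0); rewrite HH; field.
have Ht_int : intvec Ht by case: Ht_primitive.
have [k [_ Htk]] := lat_gamma_norm Ht_int (Ht_norm_gt0 a_gt0 b_gt0 c_gt0 d_gt0 Ht_norm) gammaX.
have /dvdnP[N abN] := dvdn_gamma_norm d_gt0 cop (etrans (esym Htk) Ht_norm).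
have vE : v = mukai_vec (a * c)%N%:R (d%:R *: Ht) (b * c)%N%:R by rewrite /v -HE -rE -sE.
have Ht_prim := primitive_scale_int (@intvecD n) (@intvecZ n) Ht_primitive.
clearbody v; subst v.
by split; [|split]; [apply: NX_structure | apply: (NY_structure (N := N))
                    | apply: (KY_structure (N := N))].
Qed.
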